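(* Let $f \colon Q \twoheadrightarrow Q'$ be a partial surjection between finite sets. Then for every simple type $A$, $\mathrm{Reg}_{Q'}(A) \subseteq \mathrm{Reg}_Q(A)$ (as Boolean subalgebras of $\wp(\Lambda(A))$).
   Context: Simple types are generated from a base type $o$ by $\Rightarrow$; $\Lambda(A)$ is the set of closed simply typed $\lambda$-terms of type $A$ modulo $\beta\eta$. For a finite set $Q$: $[\![o]\!]_Q = Q$, $[\![A\Rightarrow B]\!]_Q$ = all functions $[\![A]\!]_Q \to [\![B]\!]_Q$, and $[\![M]\!]_Q \in [\![A]\!]_Q$ is the standard interpretation of $M$. $\mathrm{Reg}_Q(A) = \{\{M \in \Lambda(A) : [\![M]\!]_Q \in F\} : F \subseteq [\![A]\!]_Q\}$. A partial surjection $f \colon Q \twoheadrightarrow Q'$ is a relation that is the graph of a partial function surjective onto $Q'$. *)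

From mathcomp Require Import all_boot.
Set Implicit Arguments. Unset Strict Implicit. Unset Printing Implicit Defensive.

Inductive ty : Type := o : ty | arr : ty -> ty -> ty.

Inductive var : list ty -> ty -> Type :=
| Vz : forall G A, var (A :: G) A
| Vs : forall G A B, var G A -> var (B :: G) A.

Inductive tm : list ty -> ty -> Type :=
| tvar : forall G A, var G A -> tm G A
| tlam : forall G A B, tm (A :: G) B -> tm G (arr A B)
| tapp : forall G A B, tm G (arr A B) -> tm G A -> tm G B.

(* Closed terms of type A (raw, not quotiented). *)
Definition closed_tm (A : ty) := tm nil A.

Section Sem.
Variable Q : finType.

Fixpoint sem (A : ty) : Type :=
  match A with o => Q | arr A B => sem A -> sem B end.

Fixpoint env (G : list ty) : Type :=
  match G with nil => unit | A :: G => (sem A * env G)%type end.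

Fixpoint lookup G A (v : var G A) : env G -> sem A :=
  match v in var G A return env G -> sem A with
  | Vz _ _ => fun e => fst e
  | Vs _ _ _ v' => fun e => lookup v' (snd e)
  end.

Fixpoint eval G A (M : tm G A) : env G -> sem A :=
  match M in tm G A return env G -> sem A with
  | tvar _ _ v => lookup v
  | tlam _ _ _ M => fun e x => eval M (x, e)
  | tapp _ _ _ M N => fun e => eval M e (eval N e)
  end.

Definition interp A (M : closed_tm A) : sem A := eval M tt.

Definition Reg (A : ty) (L : closed_tm A -> Prop) : Prop :=
  exists F : sem A -> Prop, forall M : closed_tm A, L M <-> F (interp M).
End Sem.

Definition partial_surjection (Q Q' : finType) (f : Q -> Q' -> Prop) : Prop :=
  (forall q a b, f q a -> f q b -> a = b) /\ (forall q', exists q, f q q').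

From mathcomp Require Import all_boot.
From Stdlib Require Import Classical ClassicalEpsilon FunctionalExtensionality.

(* Lift f to a logical relation between [[A]]_Q and [[A]]_Q'.  By the
   fundamental lemma, [[M]]_Q and [[M]]_Q' are related for every closed M,
   and at every type the lifted relation is again a partial surjection:
   functional by extensionality (using surjectivity on the domain), onto by
   choosing preimages pointwise.  So [[M]]_Q' is determined by [[M]]_Q, and
   a set of the form {M | [[M]]_Q' in F'} is {M | [[M]]_Q relates into F'}. *)

Definition functional_rel {X Y : Type} (R : X -> Y -> Prop) : Prop :=
  forall x y1 y2, R x y1 -> R x y2 -> y1 = y2.

Definition onto_rel {X Y : Type} (R : X -> Y -> Prop) : Prop :=
  forall y, exists x, R x y.

Section ArrowRel.
Context {X Y X2 Y2 : Type}.
Variables (R : X -> Y -> Prop) (S : X2 -> Y2 -> Prop).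

Definition arrow_rel (g : X -> X2) (g' : Y -> Y2) : Prop :=
  forall x x', R x x' -> S (g x) (g' x').

Lemma functional_arrow_rel :
  onto_rel R -> functional_rel S -> functional_rel arrow_rel.
Proof.
move=> R_onto S_fun g g1 g2 Hg1 Hg2; apply: functional_extensionality => x'.
have [x Rxx'] := R_onto x'.
exact: S_fun (Hg1 _ _ Rxx') (Hg2 _ _ Rxx').
Qed.

(* The inhabitant of X -> X2 only provides a value at points without an
   R-relative, where any value will do. *)
Lemma arrow_rel_preimage (g' : Y -> Y2) :
  functional_rel R -> onto_rel S -> inhabited (X -> X2) ->
  exists g, arrow_rel g g'.
Proof.
move=> R_fun S_onto [h].
pose good x y := forall x', R x x' -> S y (g' x').
exists (fun x => epsilon (inhabits (h x)) (good x)); move=> x x' Rxx'.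
have [y Sy] := S_onto (g' x').
have good_y : good x y by move=> x'' Rxx''; rewrite -(R_fun _ _ _ Rxx' Rxx'').
exact: (epsilon_spec (inhabits (h x)) (good x) (ex_intro _ y good_y)).
Qed.

End ArrowRel.

Section Inhabitation.
Context {Q : finType}.

Fixpoint sem_const (q : Q) (T : ty) : sem Q T :=
  if T is arr _ B then fun _ => sem_const q B else q.

(* Over an empty base type, [[T]] is inhabited iff T holds as a formula of
   implicational logic in which o is read as False. *)
Fixpoint holds_empty (T : ty) : bool :=
  if T is arr A B then holds_empty A ==> holds_empty B else false.

Lemma inhabited_sem_empty (T : ty) :
  ~ inhabited Q -> inhabited (sem Q T) <-> holds_empty T.
Proof.
move=> Q0; elim: T => [|A IHA B IHB] /=; first by split.
case: (holds_empty A) IHA => /= IHA.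
- have [a] := proj2 IHA isT.
  by split=> [[h]|/IHB [b]]; [apply/IHB; exists; exact: h a | exists => _].
- split=> // _; exists => a.
  by have := proj1 IHA (inhabits a).
Qed.

End Inhabitation.

Section LogicalRelation.
Context {Q Q' : finType}.
Variable f : Q -> Q' -> Prop.

Fixpoint LR (A : ty) : sem Q A -> sem Q' A -> Prop :=
  match A return sem Q A -> sem Q' A -> Prop with
  | o => f
  | arr A B => arrow_rel (LR A) (LR B)
  end.

Fixpoint LR_env (G : list ty) : env Q G -> env Q' G -> Prop :=
  match G return env Q G -> env Q' G -> Prop with
  | nil => fun _ _ => True
  | A :: G => fun e e' => LR A e.1 e'.1 /\ LR_env G e.2 e'.2
  end.

Lemma lookup_LR G A (v : var G A) e e' :
  LR_env G e e' -> LR A (lookup v e) (lookup v e').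
Proof.
elim: v e e' => [G0 A0|G0 A0 B0 v IHv] e e' /= [LRhd LRtl].
- exact: LRhd.
- exact: IHv.
Qed.

Lemma eval_LR G A (M : tm G A) e e' :
  LR_env G e e' -> LR A (eval M e) (eval M e').
Proof.
elim: M e e' => [G0 A0 v|G0 A0 B0 M IHM|G0 A0 B0 M IHM N IHN] e e' LRe /=.
- exact: lookup_LR.
- by move=> x x' LRx; apply: IHM.
- exact: IHM _ _ LRe _ _ (IHN _ _ LRe).
Qed.

Lemma interp_LR {A} (M : closed_tm A) : LR A (interp Q M) (interp Q' M).
Proof. exact: eval_LR. Qed.

Hypothesis f_psurj : partial_surjection f.

Lemma inhabited_sem_psurj (T : ty) :
  inhabited (sem Q' T) -> inhabited (sem Q T).
Proof.
case: (classic (inhabited Q)) => [[q] _|Q0]; first by exists; exact: sem_const q T.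
have Q'0 : ~ inhabited Q'.
  by case=> q'; have [q _] := proj2 f_psurj q'; apply: Q0.
by move/(inhabited_sem_empty T Q'0)/(inhabited_sem_empty T Q0).
Qed.

Lemma LR_psurj (T : ty) : functional_rel (LR T) /\ onto_rel (LR T).
Proof.
elim: T => [|A [funA ontoA] B [funB ontoB]] //=; split.
- exact: functional_arrow_rel.
- move=> g'; apply: arrow_rel_preimage => //.
  exact: (inhabited_sem_psurj (arr A B)) (inhabits g').
Qed.

End LogicalRelation.

Theorem mainTheorem4 (Q Q' : finType) (f : Q -> Q' -> Prop) :
  partial_surjection f ->
  forall (A : ty) (L : closed_tm A -> Prop), Reg Q' L -> Reg Q L.
Proof.
move=> f_psurj A L [F' HF'].
have [LR_fun _] := LR_psurj f f_psurj A.
exists (fun x => exists x', LR f A x x' /\ F' x') => M.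
have LR_M := interp_LR f M.
rewrite HF'; split=> [F'M | [x' [LRx F'x']]]; first by exists (interp Q' M).
by rewrite (LR_fun _ _ _ LR_M LRx).
Qed.
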